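(* If $G$ is a finite nonabelian group, then $K(G)\le G'$.
   Context: For $\chi\in\mathrm{Irr}(G)$, the center of $\chi$ is $Z(\chi)=\{g\in G : |\chi(g)|=\chi(1)\}$. For a nonabelian group $G$, let $\mathcal{X}=\{\chi\in\mathrm{Irr}(G) : Z(\chi)>Z(G)\}$ (strict containment) and define $K(G)=\bigcap_{\chi\in\mathcal{X}}\ker(\chi)$. *)

From mathcomp Require Import all_boot all_order all_algebra all_fingroup all_solvable all_field all_character.
Set Implicit Arguments. Unset Strict Implicit. Unset Printing Implicit Defensive.
Import GroupScope GRing.Theory Num.Theory.
Local Open Scope ring_scope.

Definition char_center (gT : finGroupType) (G : {group gT}) (chi : 'CF(G)) : {set gT} :=
  [set g in G | `|chi g| == chi 1%g].

Definition KG (gT : finGroupType) (G : {group gT}) : {set gT} :=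
  G :&: \bigcap_(i : Iirr G | 'Z(G) \proper char_center 'chi_i) cfker 'chi[G]_i.

(* A linear character has absolute value 1 = chi(1) everywhere on G, so its
   center is all of G; when G is nonabelian this properly contains Z(G).
   Hence every linear character lies in X, and K(G) is contained in the
   intersection of the kernels of the linear characters, which is G'. *)

Set Implicit Arguments. Unset Strict Implicit. Unset Printing Implicit Defensive.
From mathcomp Require Import all_boot all_order all_algebra all_fingroup all_solvable all_field all_character.
Import GroupScope GRing.Theory Num.Theory.
Local Open Scope ring_scope.

Section CharCenter.

Variables (gT : finGroupType) (G : {group gT}).

Lemma char_center_lin_char (xi : 'CF(G)) :
  xi \is a linear_char -> char_center xi = G.
Proof.
move=> lin_xi; apply/setP => g; rewrite inE andb_idr // => Gg.
by rewrite (normC_lin_char lin_xi Gg) (lin_char1 lin_xi).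
Qed.

Lemma center_proper_nonabelian : ~~ abelian G -> 'Z(G) \proper G.
Proof.
move=> nabG; rewrite properEneq center_sub andbT.
by apply: contra nabG => /eqP/center_idP.
Qed.

Lemma KG_sub_cfker (i : Iirr G) :
  'Z(G) \proper char_center 'chi_i -> KG G \subset cfker 'chi_i.
Proof. by move=> Xi; rewrite subIset // (bigcap_inf i) ?orbT. Qed.

End CharCenter.

Theorem lemma2p1 (gT : finGroupType) (G : {group gT}) :
  ~~ abelian G -> KG G \subset (G^`(1))%g.
Proof.
move=> nabG; rewrite -cap_cfker_lin_irr; apply/bigcapsP => i lin_i.
apply: KG_sub_cfker.
rewrite (char_center_lin_char lin_i).
exact: center_proper_nonabelian.
Qed.
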